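(* There is a first-order formula $\varphi_{\mathrm{Bit}}^{R}(x,z)$ over binary relation symbols $<,\lhd$ and unary relation symbols $C,Q$ such that for every $n\in\mathbb{N}$ and all $a,b\in[n]$, $([n],<^n,\lhd^n,C^n,Q^n)\models\varphi_{\mathrm{Bit}}^{R}(a,b)$ iff the $r(b)$-th bit of the binary representation of $a$ is 1.
   Context: $[n]=\{0,1,\dots,n\}$; $<$ is the usual order on $\mathbb{N}$ and $P^n=P\cap[n]^k$ for a $k$-ary relation $P$ on $\mathbb{N}$. Bits are numbered from 0 at the least significant position. Let $q_i=\frac{i(i+1)}{2}$. For $x\in\mathbb{N}$ let $c(x)=\max\{i: q_i\le x\}$, $q(x)=q_{c(x)}$, $r(x)=x-q(x)$. The linear order $\lhd$: $x\lhd y$ iff $r(x)<r(y)$, or $r(x)=r(y)$ and $c(x)<c(y)$. $C=\{x: 2\nmid\lfloor (c(x)+1)/2^{r(x)}\rfloor\}$, $Q=\{x: 2\nmid\lfloor q_{c(x)+1}/2^{r(x)}\rfloor\}$. *)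

From mathcomp Require Import all_boot.
Set Implicit Arguments. Unset Strict Implicit. Unset Printing Implicit Defensive.

Definition qtri (i : nat) : nat := (i * i.+1) %/ 2.

(* c(x) = max { i : q_i <= x }  (any such i satisfies i <= x). *)
Definition cfun (x : nat) : nat := \max_(i < x.+1 | qtri i <= x) i.
Definition qfun (x : nat) : nat := qtri (cfun x).
Definition rfun (x : nat) : nat := x - qfun x.

Definition lhd (x y : nat) : bool :=
  (rfun x < rfun y) || ((rfun x == rfun y) && (cfun x < cfun y)).

Definition Cset (x : nat) : bool := odd ((cfun x).+1 %/ 2 ^ rfun x).
Definition Qset (x : nat) : bool := odd (qtri (cfun x).+1 %/ 2 ^ rfun x).

Definition bit (a i : nat) : bool := odd (a %/ 2 ^ i).

Inductive form : Type :=
| FEq  : nat -> nat -> form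
| FLt  : nat -> nat -> form
| FLhd : nat -> nat -> form
| FC   : nat -> form
| FQ   : nat -> form
| FNot : form -> form
| FAnd : form -> form -> form
| FOr  : form -> form -> form
| FEx  : nat -> form -> form
| FAll : nat -> form -> form.

Definition upd (e : nat -> nat) (v a : nat) : nat -> nat :=
  fun w => if w == v then a else e w.

(* Satisfaction in the finite structure ([n], <^n, <|^n, C^n, Q^n), with
   universe [n] = {0,...,n}, under the assignment e. *)
Fixpoint sat (n : nat) (e : nat -> nat) (f : form) : Prop :=
  match f with
  | FEq i j => e i = e j
  | FLt i j => e i < e j
  | FLhd i j => lhd (e i) (e j)
  | FC i => Cset (e i)
  | FQ i => Qset (e i)
  | FNot g => ~ sat n e g
  | FAnd g h => sat n e g /\ sat n e h
  | FOr g h => sat n e g \/ sat n e h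
  | FEx v g => exists a, a <= n /\ sat n (upd e v a) g
  | FAll v g => forall a, a <= n -> sat n (upd e v a) g
  end.

(* Write every x as qtri c + r with r <= c: then x < y is the lexicographic
   order on (c, r) and x <| y the lexicographic order on (r, c).  Bit r(z) of
   a = qtri c(a) + r(a) is the xor of bit r(z) of qtri c(a), bit r(z) of
   r(a) and the carry into position r(z); by carry lookahead the carry is a
   first-order statement about positions, and positions are represented by
   points through r.  Bit j of qtri c is Q at the point (c - 1, j) and bit j
   of r(a) is C at the point (r(a) - 1, j).  What remains is to define
   r x = r y, r x < r y, c y = c x + 1 and r y = c x + 1 from < and <|; this
   uses the diagonal points qtri c + c, which end the rows of < and begin the
   classes of <|. *)

From mathcomp Require Import all_boot zify.

Set Implicit Arguments.
Unset Strict Implicit.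
Unset Printing Implicit Defensive.

(** * Triangular coordinates *)

Lemma qtriS k : qtri k.+1 = qtri k + k.+1.
Proof.
rewrite /qtri.
have -> : k.+1 * k.+2 = k.+1 * 2 + k * k.+1 by rewrite mulnC; nia.
by rewrite divnMDl // addnC.
Qed.

Lemma leq_qtri m n : m <= n -> qtri m <= qtri n.
Proof. by move=> /subnK <-; elim: (n - m) => //= d IH; rewrite addSn qtriS; lia. Qed.

Lemma ltn_qtri m n : m < n -> qtri m + m < qtri n.
Proof. by move=> /leq_qtri; rewrite qtriS; lia. Qed.

Lemma leq_qtri_self n : n <= qtri n.
Proof. by elim: n => // n IH; rewrite qtriS; lia. Qed.

Lemma cfun_unique c x : qtri c <= x < qtri c.+1 -> cfun x = c.
Proof.
move=> /andP [lo hi]; have c_le_x : c < x.+1 by have := leq_qtri_self c; lia.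
apply/eqP; rewrite eqn_leq; apply/andP; split.
  by apply/bigmax_leqP => i le_i; case: leqP => // /leq_qtri; lia.
exact: (@leq_bigmax_cond _ (fun i : 'I_x.+1 => qtri i <= x) val (Ordinal c_le_x)).
Qed.

Lemma cfun_bounds x : qtri (cfun x) <= x < qtri (cfun x).+1.
Proof.
suff [c bc] : exists c, qtri c <= x < qtri c.+1 by rewrite (cfun_unique bc).
elim: x => [|x [c /andP [lo hi]]]; first by exists 0.
case: (ltnP x.+1 (qtri c.+1)) => [lt_x|le_x]; first by exists c; lia.
by exists c.+1; rewrite (qtriS c.+1); lia.
Qed.

Lemma cfun_rfun x : x = qtri (cfun x) + rfun x.
Proof. by have := cfun_bounds x; rewrite /rfun /qfun; lia. Qed.

Lemma rfun_le_cfun x : rfun x <= cfun x.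
Proof. by have := cfun_bounds x; rewrite /rfun /qfun qtriS; lia. Qed.

Lemma cfun_qtriD c r : r <= c -> cfun (qtri c + r) = c.
Proof. by move=> le_rc; apply: cfun_unique; rewrite qtriS; lia. Qed.

Lemma rfun_qtriD c r : r <= c -> rfun (qtri c + r) = r.
Proof. by move=> le_rc; rewrite /rfun /qfun cfun_qtriD //; lia. Qed.

Lemma ltn_cr x y :
  (x < y) = (cfun x < cfun y) || ((cfun x == cfun y) && (rfun x < rfun y)).
Proof.
rewrite {1}(cfun_rfun x) {1}(cfun_rfun y).
have := rfun_le_cfun x; have := rfun_le_cfun y.
case: (ltngtP (cfun x) (cfun y)) => [lt|lt|->] //=;
  by [lia | have := ltn_qtri lt; lia].
Qed.

Lemma eqn_cr x y : (x == y) = (cfun x == cfun y) && (rfun x == rfun y).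
Proof.
apply/eqP/andP => [->|[/eqP eq_c /eqP eq_r]]; first by [].
by rewrite (cfun_rfun x) (cfun_rfun y) eq_c eq_r.
Qed.

Lemma leq_cr x y :
  (x <= y) = (cfun x < cfun y) || ((cfun x == cfun y) && (rfun x <= rfun y)).
Proof. by rewrite leq_eqVlt eqn_cr ltn_cr; lia. Qed.

Lemma ltn_qtriD c r x : r <= c -> c < cfun x -> qtri c + r < x.
Proof. by move=> le_rc lt_cx; rewrite ltn_cr cfun_qtriD // lt_cx. Qed.

Lemma leq_qtriD_rfun x r : r <= rfun x -> qtri (cfun x) + r <= x.
Proof. by move=> le_r; rewrite {2}(cfun_rfun x) leq_add2l. Qed.

Definition diag x := rfun x == cfun x.

Lemma diag_qtriD c : diag (qtri c + c).
Proof. by rewrite /diag cfun_qtriD // rfun_qtriD. Qed.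

Lemma diag_betweenE x y d : diag d -> (x <= d < y) = (cfun x <= cfun d < cfun y).
Proof.
move=> /eqP dd; rewrite (leq_cr x d) (ltn_cr d y) dd.
by have := rfun_le_cfun x; have := rfun_le_cfun y; lia.
Qed.

Lemma diag_eq d d' : diag d -> diag d' -> cfun d = cfun d' -> d = d'.
Proof.
by move=> /eqP dd1 /eqP dd2 eq_c; apply/eqP; rewrite eqn_cr dd1 dd2 eq_c !eqxx.
Qed.

(** * Binary addition *)

Definition carry u v k := 2 ^ k <= u %% 2 ^ k + v %% 2 ^ k.

Lemma modn_exp2S u k : u %% 2 ^ k.+1 = u %% 2 ^ k + bit u k * 2 ^ k.
Proof.
have pos : 0 < 2 ^ k by rewrite expn_gt0.
have lt_mod := ltn_pmod u pos.
have {1}-> : u = (u %/ 2 ^ k)./2 * 2 ^ k.+1 + (u %% 2 ^ k + bit u k * 2 ^ k).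
  rewrite /bit expnS {1}(divn_eq u (2 ^ k)) -{1}(odd_double_half (u %/ 2 ^ k)).
  by case: odd => /=; nia.
rewrite modnMDl modn_small // expnS /bit; case: odd => /=; lia.
Qed.

Lemma bitD u v k : bit (u + v) k = bit u k (+) bit v k (+) carry u v k.
Proof.
have pos : 0 < 2 ^ k by rewrite expn_gt0.
have lt_u := ltn_pmod u pos; have lt_v := ltn_pmod v pos.
have -> : u + v = (u %/ 2 ^ k + v %/ 2 ^ k) * 2 ^ k + (u %% 2 ^ k + v %% 2 ^ k).
  by rewrite {1}(divn_eq u (2 ^ k)) {1}(divn_eq v (2 ^ k)); nia.
rewrite /bit /carry divnMDl // !oddD.
have -> : (u %% 2 ^ k + v %% 2 ^ k) %/ 2 ^ k = (2 ^ k <= u %% 2 ^ k + v %% 2 ^ k).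
  have := ltn_divLR (u %% 2 ^ k + v %% 2 ^ k) 2 pos.
  have := leq_divRL 1 (u %% 2 ^ k + v %% 2 ^ k) pos.
  by move: (_ %/ 2 ^ k) => q; case: (leqP (2 ^ k)); lia.
by case: odd; case: odd; case: leqP.
Qed.

Lemma carry0 u v : carry u v 0 = false.
Proof. by rewrite /carry expn0 !modn1. Qed.

Lemma carryS u v k :
  carry u v k.+1 = (bit u k && bit v k) || ((bit u k || bit v k) && carry u v k).
Proof.
have pos : 0 < 2 ^ k by rewrite expn_gt0.
have lt_u := ltn_pmod u pos; have lt_v := ltn_pmod v pos.
by rewrite /carry !modn_exp2S expnS; case: (bit u k); case: (bit v k) => /=; lia.
Qed.

Lemma carryP u v k :
  carry u v k <-> exists2 j, j < k &
    [/\ bit u j, bit v j & forall l, j < l < k -> bit u l || bit v l].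
Proof.
elim: k => [|k IH]; first by rewrite carry0; split => // -[].
rewrite carryS; split.
  case/orP => [/andP [bu bv] | /andP [buv /IH [j lt_jk [bu bv prop]]]].
    by exists k => //; split => // l; lia.
  exists j; first by lia.
  split => // l /andP [lt_jl]; rewrite ltnS leq_eqVlt => /orP [/eqP -> //|lt_lk].
  by apply: prop; rewrite lt_jl.
move=> [j lt_jk [bu bv prop]].
have [lt_j|ge_j] := ltnP j k; last first.
  suff -> : k = j by rewrite bu bv.
  lia.
apply/orP; right; rewrite prop ?lt_j //=.
by apply/IH; exists j => //; split => // l /andP [? ?]; apply: prop; lia.
Qed.

Lemma bit_leq u j : bit u j -> 2 ^ j <= u.
Proof. by apply: contraLR; rewrite -ltnNge /bit => lt_u; rewrite divn_small. Qed.

Lemma qtri_lt_exp2 c : qtri c < 2 ^ c.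
Proof.
by elim: c => // c IH; rewrite qtriS expnS; have := ltn_expl c (isT : 1 < 2); lia.
Qed.

(** * First-order definitions *)

Definition bounded n (e : nat -> nat) := forall v, e v <= n.

Lemma bounded_upd n e v a : bounded n e -> a <= n -> bounded n (upd e v a).
Proof. by move=> He le_an w; rewrite /upd; case: eqP. Qed.

(* Each formula below quantifies over its own fixed variables (40 and above);
   the hypotheses [x < k] of the [sat_] lemmas keep the free variables apart
   from them, and are discharged by the first hint. *)
#[local] Hint Extern 0 (is_true (_ < _)) => lia : core.
#[local] Hint Extern 0 (bounded _ _) =>
  solve [repeat apply: bounded_upd; assumption] : core.

Arguments upd e v a w /.

Ltac simpl_upd := rewrite /=; repeat match goal with
  |- context [?v == ?w] => rewrite (_ : (v == w) = false) /=; last by apply/eqP; lia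
  end.

Definition FImp f g := FOr (FNot f) g.
Definition FLe i j := FNot (FLt j i).
Definition FXor f g := FOr (FAnd f (FNot g)) (FAnd (FNot f) g).

Lemma sat_FXor n e f g (b c : bool) :
  (sat n e f <-> b) -> (sat n e g <-> c) -> sat n e (FXor f g) <-> b (+) c.
Proof. by move=> Hf Hg; rewrite /= {}Hf {}Hg; case: b; case: c; intuition. Qed.

Definition FOne i :=
  FEx 103 (FAnd (FLt 103 i) (FAll 104 (FImp (FLt 104 i) (FEq 104 103)))).

Lemma sat_FOne n e i : i < 103 -> bounded n e -> sat n e (FOne i) <-> e i = 1.
Proof.
move=> lt_i He; rewrite /FOne /FImp /=; simpl_upd; split.
  move=> [a [_ [lt_a uniq_a]]].
  by have := He i; have := uniq_a 0; have := uniq_a (e i).-1; lia.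
by move=> ->; exists 0; split => //; split => // b _; lia.
Qed.
Opaque FOne.

(* Off the diagonal, the immediate [<|]-predecessor of [x] is the point with
   the same [rfun] one row earlier, [cfun x] below [x]; this gap is at least 2
   except for [x = 1].  On the diagonal, it is [x - 1] or lies above [x]. *)
Definition FDiag i := FAnd (FNot (FOne i)) (FNot (FEx 100 (FAnd (FLhd 100 i)
  (FAnd (FNot (FEx 101 (FAnd (FLhd 100 101) (FLhd 101 i))))
        (FEx 102 (FAnd (FLt 100 102) (FLt 102 i))))))).

Lemma sat_FDiag n e i : i < 100 -> bounded n e -> sat n e (FDiag i) <-> diag (e i).
Proof.
move=> lt_i He; rewrite /FDiag /= sat_FOne //.
simpl_upd; move: (e i) (He i) => x le_xn; rewrite /diag /lhd.
have ex := cfun_rfun x; have rx := rfun_le_cfun x.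
split => [[ne1 no_gap]|/eqP dx].
  apply/eqP; case: (ltnP (rfun x) (cfun x)) => [lt_rc|]; last lia.
  exfalso; apply: no_gap.
  have c_gt1 : 1 < cfun x.
    move: ex lt_rc; case: (cfun x) => [|[|c]] // ex lt_rc.
    by case: ne1; rewrite ex (_ : qtri 1 = 1) //; lia.
  set p := qtri (cfun x).-1 + rfun x.
  have [cp rp] : cfun p = (cfun x).-1 /\ rfun p = rfun x.
    by rewrite cfun_qtriD ?rfun_qtriD //; lia.
  have lt_px : p < x by rewrite ltn_cr cp rp; lia.
  exists p; rewrite cp rp; split; first lia.
  split; first lia.
  split; first by move=> [u [_ []]]; have := rfun_le_cfun u; lia.
  have := qtriS (cfun x).-1; rewrite prednK; last lia.
  by exists p.+1; lia.
split.
  by move=> x1; move: dx; rewrite x1 (_ : 1 = qtri 1 + 0) // cfun_qtriD // rfun_qtriD.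
move=> [p [_ [lhd_px [no_between [w [_ [lt_pw lt_wx]]]]]]].
have r_pos : 0 < rfun x.
  move: ex; rewrite dx; case: (cfun x) => // x0.
  by move: lt_wx; rewrite x0 (_ : qtri 0 = 0) //; lia.
have x_pred : x.-1 = qtri (cfun x) + (rfun x).-1 by lia.
have [cx1 rx1] : cfun x.-1 = cfun x /\ rfun x.-1 = (rfun x).-1.
  by rewrite x_pred cfun_qtriD ?rfun_qtriD //; lia.
apply: no_between; exists x.-1; rewrite cx1 rx1.
by have := ltn_cr p x.-1; have := rfun_le_cfun p; rewrite cx1 rx1; lia.
Qed.

Lemma sat_FDiag_upd n e v a : v < 100 -> bounded n e -> a <= n ->
  sat n (upd e v a) (FDiag v) <-> diag a.
Proof. by move=> lt_v He le_an; rewrite sat_FDiag //= eqxx. Qed.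
Opaque FDiag.

Definition FNoDiagBetween x y :=
  FNot (FEx 90 (FAnd (FDiag 90) (FAnd (FLhd x 90) (FOr (FLhd 90 y) (FEq 90 y))))).

(* Each class [rfun x = r] of [<|] starts with the diagonal point
   [qtri r + r], so two comparable points share [rfun] iff no diagonal
   point separates them. *)
Lemma sat_FNoDiagBetween n e x y : x < 90 -> y < 90 -> bounded n e ->
  lhd (e x) (e y) -> sat n e (FNoDiagBetween x y) <-> rfun (e x) = rfun (e y).
Proof.
move=> lt_x lt_y He; rewrite /FNoDiagBetween /=; simpl_upd.
move: (e x) (e y) (He y) => a b le_bn; rewrite /lhd => lhd_ab.
have := rfun_le_cfun a; have := rfun_le_cfun b.
split => [no_diag|eq_r [d [le_dn [diag_d [lhd_ad lhd_db]]]]].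
  case: (ltnP (rfun a) (rfun b)) => [lt_r|]; last lia.
  case: no_diag; set d := qtri (rfun b) + rfun b.
  have [cd rd] : cfun d = rfun b /\ rfun d = rfun b by rewrite cfun_qtriD ?rfun_qtriD.
  have le_db : d <= b by rewrite leq_cr cd rd; lia.
  have le_dn : d <= n by exact: leq_trans le_db le_bn.
  exists d; rewrite sat_FDiag_upd ?diag_qtriD // cd rd.
  by have := eqn_cr d b; rewrite cd rd; lia.
move: diag_d; rewrite sat_FDiag_upd // => /eqP dd.
by have := rfun_le_cfun d; case: lhd_db => [|db]; [|subst d]; lia.
Qed.
Opaque FNoDiagBetween.

Definition FSameR x y := FOr (FEq x y) (FOr (FAnd (FLhd x y) (FNoDiagBetween x y))
                                            (FAnd (FLhd y x) (FNoDiagBetween y x))).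

Lemma sat_FSameR n e x y : x < 90 -> y < 90 -> bounded n e ->
  sat n e (FSameR x y) <-> rfun (e x) = rfun (e y).
Proof.
move=> lt_x lt_y He; rewrite /FSameR /=; split.
  by case=> [->|[[lhd_xy /sat_FNoDiagBetween ->]|[lhd_yx /sat_FNoDiagBetween ->]]].
move=> eq_r; case: (ltngtP (cfun (e x)) (cfun (e y))) => [lt_c|lt_c|eq_c].
- have lhd_xy : lhd (e x) (e y) by rewrite /lhd eq_r lt_c eqxx orbT.
  by right; left; rewrite sat_FNoDiagBetween.
- have lhd_yx : lhd (e y) (e x) by rewrite /lhd eq_r lt_c eqxx orbT.
  by right; right; rewrite sat_FNoDiagBetween.
- by left; apply/eqP; rewrite eqn_cr eq_r eq_c !eqxx.
Qed.
Opaque FSameR.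

Definition FLtR x y := FAnd (FLhd x y) (FNot (FSameR x y)).

Lemma sat_FLtR n e x y : x < 90 -> y < 90 -> bounded n e ->
  sat n e (FLtR x y) <-> rfun (e x) < rfun (e y).
Proof. by move=> lt_x lt_y He; rewrite /FLtR /= sat_FSameR // /lhd; lia. Qed.
Opaque FLtR.

(* [cfun y = (cfun x).+1] iff exactly one diagonal point lies in [[x, y)]:
   the diagonal points of [[x, y)] are those of the rows [cfun x, ...,
   (cfun y).-1]. *)
Definition FCSucc x y := FAnd (FLt x y) (FEx 80 (FAnd (FDiag 80)
  (FAnd (FLe x 80) (FAnd (FLt 80 y)
    (FAll 81 (FImp (FAnd (FDiag 81) (FAnd (FLe x 81) (FLt 81 y))) (FEq 81 80))))))).

Lemma sat_FCSucc n e x y : x < 80 -> y < 80 -> bounded n e ->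
  sat n e (FCSucc x y) <-> cfun (e y) = (cfun (e x)).+1.
Proof.
move=> lt_x lt_y He; rewrite /FCSucc /FImp /FLe /=; simpl_upd.
move: (He y); move: (e x) (e y) => a b le_bn.
have diag_row c : cfun a <= c < cfun b -> a <= qtri c + c < b.
  by move=> range; rewrite diag_betweenE ?diag_qtriD // cfun_qtriD.
split=> [[_ [d [le_dn [diag_d [le_ad [lt_db uniq_d]]]]]]|succ_ab].
  rewrite sat_FDiag_upd // in diag_d.
  have /andP [le_cad lt_cdb] : cfun a <= cfun d < cfun b.
    by rewrite -diag_betweenE // lt_db andbT; lia.
  have uniq_row c : cfun a <= c < cfun b -> qtri c + c = d.
    move=> /diag_row range; case: (uniq_d (qtri c + c)) => [|[]|//]; first lia.
    have le_n : qtri c + c <= n by lia.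
    by rewrite sat_FDiag_upd ?diag_qtriD //; lia.
  case: (ltngtP (cfun b) (cfun a).+1) => [|gt_b|//]; first lia.
  have := uniq_row (cfun a); have := uniq_row (cfun a).+1; rewrite qtriS; lia.
have range : cfun a <= cfun a < cfun b by rewrite succ_ab leqnn ltnSn.
have /andP [le_ad lt_db] := diag_row _ range.
split; first by rewrite ltn_cr succ_ab ltnSn.
exists (qtri (cfun a) + cfun a); split; first lia.
rewrite sat_FDiag_upd ?diag_qtriD //; last lia.
do 3 (split; first lia).
have le_dn : qtri (cfun a) + cfun a <= n by lia.
move=> d' le_d'n; rewrite sat_FDiag_upd //.
case: (boolP (diag d' && (a <= d' < b))) => [/andP [diag_d' range']|out].
  right; apply: diag_eq; rewrite ?diag_qtriD ?cfun_qtriD //.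
  by move: range'; rewrite diag_betweenE // succ_ab; lia.
by left=> -[diag_d' ?]; case/negP: out; rewrite diag_d'; lia.
Qed.
Opaque FCSucc.

Definition FCSuccR x z := FEx 70 (FAnd (FDiag 70) (FAnd (FSameR 70 z) (FCSucc x 70))).

Lemma sat_FCSuccR n e x z : x < 70 -> z < 70 -> bounded n e ->
  sat n e (FCSuccR x z) <-> rfun (e z) = (cfun (e x)).+1.
Proof.
move=> lt_x lt_z He; rewrite /FCSuccR /=; split.
  move=> [y [le_yn]]; rewrite sat_FDiag_upd // sat_FSameR // sat_FCSucc //.
  by simpl_upd; rewrite /diag => -[/eqP dy [<- <-]].
move=> succ_xz; set y := qtri (rfun (e z)) + rfun (e z).
have [cy ry] : cfun y = rfun (e z) /\ rfun y = rfun (e z).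
  by rewrite cfun_qtriD ?rfun_qtriD.
have le_yn : y <= n.
  apply: leq_trans (He z); rewrite leq_cr cy ry.
  by have := rfun_le_cfun (e z); lia.
exists y; rewrite sat_FDiag_upd ?diag_qtriD // sat_FSameR // sat_FCSucc //.
by simpl_upd; rewrite cy ry.
Qed.
Opaque FCSuccR.

Definition FBitQ x p := FEx 60 (FAnd (FCSucc 60 x) (FAnd (FSameR 60 p) (FQ 60))).

Lemma sat_FBitQ n e x p : x < 60 -> p < 60 -> bounded n e ->
  sat n e (FBitQ x p) <-> bit (qtri (cfun (e x))) (rfun (e p)).
Proof.
move=> lt_x lt_p He; rewrite /FBitQ /=; split.
  move=> [y [le_yn]]; rewrite sat_FCSucc // sat_FSameR //.
  by simpl_upd; rewrite /Qset /bit => -[<- [<-]].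
move=> bit_xp; set c := (cfun (e x)).-1.
have lt_pc : rfun (e p) < cfun (e x).
  rewrite -(ltn_exp2l _ _ (isT : 1 < 2)).
  exact: leq_ltn_trans (bit_leq bit_xp) (qtri_lt_exp2 _).
have c_succ : c.+1 = cfun (e x) by rewrite prednK //; lia.
have le_pc : rfun (e p) <= c by lia.
have le_yn : qtri c + rfun (e p) <= n.
  by apply: ltnW; apply: leq_trans (He x); apply: ltn_qtriD; lia.
exists (qtri c + rfun (e p)); rewrite sat_FCSucc // sat_FSameR //.
by simpl_upd; rewrite /Qset cfun_qtriD // rfun_qtriD // c_succ.
Qed.
Opaque FBitQ.

Definition FBitR x p := FEx 50 (FAnd (FCSuccR 50 x) (FAnd (FSameR 50 p) (FC 50))).

Lemma sat_FBitR n e x p : x < 50 -> p < 50 -> bounded n e ->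
  sat n e (FBitR x p) <-> bit (rfun (e x)) (rfun (e p)).
Proof.
move=> lt_x lt_p He; rewrite /FBitR /=; split.
  move=> [y [le_yn]]; rewrite sat_FCSuccR // sat_FSameR //.
  by simpl_upd; rewrite /Cset /bit => -[<- [<-]].
move=> bit_xp; set c := (rfun (e x)).-1.
have lt_pr : rfun (e p) < rfun (e x).
  exact: leq_trans (ltn_expl _ (isT : 1 < 2)) (bit_leq bit_xp).
have c_succ : c.+1 = rfun (e x) by rewrite prednK //; lia.
have le_pc : rfun (e p) <= c by lia.
have le_yn : qtri c + rfun (e p) <= n.
  apply: ltnW; apply: leq_trans (He x); apply: ltn_qtriD => //.
  by have := rfun_le_cfun (e x); lia.
exists (qtri c + rfun (e p)); rewrite sat_FCSuccR // sat_FSameR //.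
by simpl_upd; rewrite /Cset cfun_qtriD // rfun_qtriD // c_succ.
Qed.
Opaque FBitR.

Definition FCarry x z := FEx 40 (FAnd (FLtR 40 z) (FAnd (FBitQ x 40) (FAnd (FBitR x 40)
  (FAll 41 (FImp (FAnd (FLtR 40 41) (FLtR 41 z)) (FOr (FBitQ x 41) (FBitR x 41))))))).

Lemma sat_FCarry n e x z : x < 40 -> z < 40 -> bounded n e ->
  sat n e (FCarry x z) <-> carry (qtri (cfun (e x))) (rfun (e x)) (rfun (e z)).
Proof.
move=> lt_x lt_z He; rewrite carryP /FCarry /FImp /=.
have row_pt r : r <= rfun (e z) ->
    qtri (cfun (e z)) + r <= n /\ rfun (qtri (cfun (e z)) + r) = r.
  move=> le_r; split; first exact: leq_trans (leq_qtriD_rfun le_r) (He z).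
  by rewrite rfun_qtriD //; have := rfun_le_cfun (e z); lia.
split.
  move=> [j [le_jn]]; rewrite sat_FLtR // sat_FBitQ // sat_FBitR //.
  simpl_upd => -[lt_jz [bq [br prop]]].
  exists (rfun j) => //; split => // l /andP [lt_jl lt_lz].
  have [le_n rl] := row_pt l (ltnW lt_lz).
  case: (prop _ le_n); rewrite ?sat_FLtR ?sat_FBitQ ?sat_FBitR //; simpl_upd; rewrite rl.
    by move=> no_range; case: no_range.
  by case=> ->; rewrite ?orbT.
move=> [j lt_jz [bq br prop]].
have [le_n rj] := row_pt j (ltnW lt_jz).
exists (qtri (cfun (e z)) + j); split => //.
rewrite sat_FLtR // sat_FBitQ // sat_FBitR //; simpl_upd; rewrite rj.
do 3 (split; first done); move=> l le_ln.
rewrite sat_FLtR // sat_FLtR // sat_FBitQ // sat_FBitR //; simpl_upd; rewrite rj.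
have [range|out] := boolP (j < rfun l < rfun (e z)).
  by right; case/orP: (prop _ range); [left | right].
by left=> -[? ?]; case/negP: out; apply/andP.
Qed.
Opaque FCarry.

Definition FBit x z := FXor (FXor (FBitQ x z) (FBitR x z)) (FCarry x z).

Lemma sat_FBit n e x z : x < 40 -> z < 40 -> bounded n e ->
  sat n e (FBit x z) <-> bit (e x) (rfun (e z)).
Proof.
move=> lt_x lt_z He.
rewrite [in bit (e x) _](cfun_rfun (e x)) bitD.
apply: sat_FXor; first apply: sat_FXor.
- exact: sat_FBitQ.
- exact: sat_FBitR.
- exact: sat_FCarry.
Qed.

Theorem lemma3p5 :
  exists phi : form,
    forall (n a b : nat), a <= n -> b <= n ->
    forall e : nat -> nat, (forall i, e i <= n) -> e 0 = a -> e 1 = b ->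
      (sat n e phi <-> bit a (rfun b)).
Proof.
by exists (FBit 0 1) => n a b _ _ e He <- <-; rewrite sat_FBit.
Qed.
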